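(* Let $p$ be an odd prime and $m,r$ integers with $m>0$ and $r\equiv 1\bmod p$. Then for every integer $0\le x<p^m$ there is a unique integer $0\le y<p^m$ such that $\mathcal{S}_r(y)\equiv x\bmod p^m$.
   Context: For integers $s$ and $n\ge0$, $\mathcal{S}_s(n)=\sum_{i=0}^{n-1}s^i$. *)

From mathcomp Require Import all_boot all_order all_algebra.
Set Implicit Arguments. Unset Strict Implicit. Unset Printing Implicit Defensive.
Import Order.TTheory GRing.Theory Num.Theory.
Local Open Scope ring_scope.

Definition Ssum (s : int) (n : nat) : int := \sum_(i < n) s ^+ i.

From mathcomp Require Import all_boot all_order all_algebra.
From mathcomp Require Import ring zify.
Set Implicit Arguments. Unset Strict Implicit.
Import Order.TTheory GRing.Theory Num.Theory.
Local Open Scope ring_scope.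

(* For odd p dividing r - 1, S_r(k) and k have the same p-adic valuation:
   S_r(p) is p times a unit mod p, and S_r(p k) = S_r(p) S_(r^p)(k).  Since
   S_r(b) - S_r(a) = r^a S_r(b - a) with r a unit mod p, the map S_r is
   injective on [0, p^m) modulo p^m, hence bijective. *)

Lemma PoszX (p j : nat) : (p ^ j)%N%:Z = p%:Z ^+ j.
Proof. by rewrite -[LHS]natz natrX natz. Qed.

Lemma SsumD s n k : Ssum s (n + k) = Ssum s n + s ^+ n * Ssum s k.
Proof.
rewrite /Ssum big_split_ord /=; congr (_ + _); rewrite mulr_sumr.
by apply: eq_bigr => i _; rewrite exprD.
Qed.

Lemma SsumM s a b : Ssum s (a * b) = Ssum s a * Ssum (s ^+ a) b.
Proof.
elim: b => [|b IHb]; first by rewrite muln0 /Ssum !big_ord0 mulr0.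
rewrite mulnS addnC SsumD IHb exprM -[b.+1]addn1 SsumD /Ssum big_ord1 expr0.
ring.
Qed.

Lemma subrX1_Ssum s k : s ^+ k - 1 = (s - 1) * Ssum s k.
Proof. exact: subrX1. Qed.

Lemma coprimez_subr1 (d s : int) : (d %| s - 1)%Z -> coprimez d s.
Proof.
case/dvdzP=> q def_s; apply/coprimezP; exists (- q, 1) => /=.
by rewrite mulNr -def_s; ring.
Qed.

Lemma dvdz_Ssum_subn (d s : int) k : (d %| s - 1)%Z -> (d %| Ssum s k - k%:Z)%Z.
Proof.
move=> d_s1; elim: k => [|k IHk]; first by rewrite /Ssum big_ord0 subrr dvdz0.
have -> : Ssum s k.+1 - k.+1%:Z = (Ssum s k - k%:Z) + (s ^+ k - 1).
  by rewrite /Ssum big_ord_recr /= -/(Ssum s k) intS; ring.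
by rewrite rpredD // subrX1_Ssum dvdz_mulr.
Qed.

Lemma Ssum_subn s n : Ssum s n - n%:Z = (s - 1) * \sum_(i < n) Ssum s i.
Proof.
elim: n => [|n IHn]; first by rewrite /Ssum !big_ord0 subrr mulr0.
rewrite big_ord_recr mulrDr -IHn -subrX1_Ssum {1}/Ssum big_ord_recr /=.
by rewrite -/(Ssum s n) intS; ring.
Qed.

(* S_s(p) - p = (s - 1) * \sum_(i < p) S_s(i), and that sum is C(p, 2) modulo p,
   a multiple of p because p is odd. *)
Lemma dvdz_sq_Ssum_subn (p : nat) s : odd p -> (p%:Z %| s - 1)%Z ->
  ((p * p)%N%:Z %| Ssum s p - p%:Z)%Z.
Proof.
move=> p_odd p_s1; rewrite Ssum_subn PoszM dvdz_mul //.
have -> : \sum_(i < p) Ssum s i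
          = \sum_(i < p) (Ssum s i - i%:Z) + (\sum_(i < p) i)%N%:Z.
  rewrite (big_morph Posz PoszD (erefl 0%:Z)) -big_split /=.
  by apply: eq_bigr => i _; rewrite subrK.
rewrite rpredD //; first by apply: rpred_sum => i _; apply: dvdz_Ssum_subn.
by rewrite -(big_mkord xpredT (fun i => i)) bin2_sum bin2odd // PoszM dvdz_mulr.
Qed.

Lemma dvdn_of_dvdz_Ssum (p j : nat) s k : odd p -> (p%:Z %| s - 1)%Z ->
  ((p ^ j)%N%:Z %| Ssum s k)%Z -> (p ^ j %| k)%N.
Proof.
move=> p_odd; elim: j s k => [|j IHj] s k p_s1 pj_S; first by rewrite dvd1n.
have p_gt0 : (0 < p)%N by case: (p) p_odd.
have /dvdnP [k' def_k] : (p %| k)%N.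
  rewrite -(dvdzE p k) -[k%:Z](subKr (Ssum s k)) rpredB ?dvdz_Ssum_subn //.
  by apply: dvdz_trans pj_S; rewrite PoszX exprS dvdz_mulr.
have [q def_Sp] := dvdzP (dvdz_sq_Ssum_subn p_odd p_s1).
have Sp_eq : Ssum s p = p%:Z * (1 + q * p%:Z).
  by rewrite -[Ssum s p](subrK p%:Z) def_Sp PoszM; ring.
subst k; move: pj_S; rewrite [(k' * p)%N]mulnC SsumM Sp_eq expnS PoszM.
rewrite -mulrA dvdz_mul2l ?eqz_nat -?lt0n //.
have unit_Sp : coprimez (p ^ j)%N%:Z (1 + q * p%:Z).
  rewrite PoszX; apply: coprimezXl; apply: coprimez_subr1.
  by rewrite addrAC subrr add0r dvdz_mull ?dvdzz.
rewrite Gauss_dvdzr // dvdn_pmul2l //.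
by apply: IHj; rewrite subrX1_Ssum dvdz_mulr.
Qed.

Lemma Ssum_inj_mod (p m : nat) r : odd p -> (p%:Z %| r - 1)%Z ->
  forall a b : nat, (a < p ^ m)%N -> (b < p ^ m)%N ->
  (Ssum r a == Ssum r b %[mod (p ^ m)%N%:Z])%Z -> a = b.
Proof.
move=> p_odd p_r1 a b; wlog le_ab : a b / (a <= b)%N.
  move=> inj ha hb eq_ab; case: (leqP a b) => [le_ab | /ltnW le_ba].
    exact: inj.
  by apply/esym/inj => //; rewrite eq_sym.
move=> _ lt_b; rewrite eqz_mod_dvd -(subnKC le_ab) SsumD.
rewrite opprD addrA subrr add0r rpredN Gauss_dvdzr; last first.
  by rewrite PoszX; apply/coprimezXl/coprimezXr/coprimez_subr1.
move=> /(dvdn_of_dvdz_Ssum p_odd p_r1) pm_ba.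
have [ba0 | ba_gt0] := posnP (b - a); first lia.
have := dvdn_leq ba_gt0 pm_ba; lia.
Qed.

Lemma inj_in_iota_onto (N : nat) (f : nat -> nat) :
  {in [pred i | (i < N)%N] &, injective f} -> (forall i, i < N -> f i < N)%N ->
  forall y, (y < N)%N -> exists2 x, (x < N)%N & f x = y.
Proof.
move=> f_inj f_lt y lt_y.
have f_uniq : uniq (map f (iota 0 N)).
  by rewrite map_inj_in_uniq ?iota_uniq // => i j; rewrite !mem_iota; apply: f_inj.
have f_sub : {subset map f (iota 0 N) <= iota 0 N}.
  by move=> _ /mapP [i /[!mem_iota] /= /f_lt lt_fi ->].
have [_ f_onto] := uniq_min_size f_uniq f_sub (eq_leq (esym (size_map f _))).
have : y \in map f (iota 0 N) by rewrite f_onto mem_iota.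
by case/mapP=> x /[!mem_iota] /= lt_x ->; exists x.
Qed.

Unset Implicit Arguments.

Theorem lemma2p2 (p m : nat) (r : int) :
  prime p -> odd p -> (0 < m)%N -> (r == 1 %[mod (p%:Z)])%Z ->
  forall x : int, 0 <= x -> x < (p ^ m)%N%:Z ->
  exists! y : nat, (y < p ^ m)%N /\ (Ssum r y == x %[mod ((p ^ m)%N%:Z)])%Z.
Proof.
move=> _ p_odd _; rewrite eqz_mod_dvd => p_r1 x x_ge0 x_lt.
have inj := Ssum_inj_mod (m := m) p_odd p_r1.
set N := (p ^ m)%N in inj x_lt *.
have N_neq0 : N%:Z != 0 by rewrite eqz_nat expn_eq0; case: (p) p_odd.
pose f y := `|(Ssum r y %% N%:Z)%Z|%N.
have f_mod y : (f y)%:Z = (Ssum r y %% N%:Z)%Z by rewrite gez0_abs ?modz_ge0.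
have f_lt y : (f y < N)%N.
  by rewrite -ltz_nat f_mod ltz_pmod // lt0r N_neq0 /=.
have f_inj : {in [pred i | (i < N)%N] &, injective f}.
  by move=> a b ha hb eq_f; apply: inj => //; rewrite -!f_mod eq_f.
have [|y lt_y fy_x] := inj_in_iota_onto f_inj (fun i _ => f_lt i) (y := `|x|%N).
  by rewrite -ltz_nat gez0_abs.
have Sy_x : (Ssum r y == x %[mod N%:Z])%Z.
  by rewrite -(gez0_abs x_ge0) -fy_x f_mod modz_mod.
exists y; split=> // y' [lt_y' Sy'_x]; apply: inj => //.
by rewrite (eqP Sy_x) eq_sym.
Qed.
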